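(* Let $e_1,e_2,e_3$ be nonzero integers with $e_1+e_2+e_3=0$, and let $a,b,c$ be integers with $e_1a^2+e_2b^2+e_3c^2=0$ and $a+b$, $b+c$, $c+a$ all nonzero. Then, as an identity of rational functions (indeed of polynomials) in $x,y,z$, $$(ax+by+cz)(x+y+z)-\tfrac12(a+b)(b+c)(c+a)\Bigl(\frac{x}{b+c}+\frac{y}{c+a}+\frac{z}{a+b}\Bigr)^2=\tfrac12(e_1a+e_2b+e_3c)\Bigl(\frac{x^2}{e_1}+\frac{y^2}{e_2}+\frac{z^2}{e_3}\Bigr).$$ *)

From mathcomp Require Import all_boot all_order all_algebra.
Set Implicit Arguments. Unset Strict Implicit. Unset Printing Implicit Defensive.

(* Expanding the left-hand side, the cross terms cancel outright: the xy coefficient is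
   (a+b) - (a+b)(b+c)(c+a)/((b+c)(c+a)) = 0, and similarly for yz and zx.  On the diagonal,
   e1 + e2 + e3 = 0 makes the x^2 coefficient of the difference of both sides equal to
   -(e1 a^2 + e2 b^2 + e3 c^2) / (2 e1 (b+c)), and symmetrically for y^2 and z^2.  So the
   difference is a multiple of the quadric e1 a^2 + e2 b^2 + e3 c^2, which vanishes. *)
From mathcomp Require Import all_boot all_order all_algebra.
From mathcomp Require Import ring.
Import Order.TTheory GRing.Theory Num.Theory.
Local Open Scope ring_scope.

Section DiagonalQuadraticIdentity.

Variables (F : fieldType) (e1 e2 e3 a b c : F).
Hypotheses (two_neq0 : 2 != 0 :> F) (e1_neq0 : e1 != 0) (e2_neq0 : e2 != 0)
  (e3_neq0 : e3 != 0) (e_sum0 : e1 + e2 + e3 = 0)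
  (ab_neq0 : a + b != 0) (bc_neq0 : b + c != 0) (ca_neq0 : c + a != 0).

Lemma diagonal_quadratic_defect (x y z : F) :
  (a * x + b * y + c * z) * (x + y + z)
  - 2^-1 * ((a + b) * (b + c) * (c + a)) * (x / (b + c) + y / (c + a) + z / (a + b)) ^+ 2
  - 2^-1 * (e1 * a + e2 * b + e3 * c) * (x ^+ 2 / e1 + y ^+ 2 / e2 + z ^+ 2 / e3)
  = - (e1 * a ^+ 2 + e2 * b ^+ 2 + e3 * c ^+ 2) / 2
    * (x ^+ 2 / (e1 * (b + c)) + y ^+ 2 / (e2 * (c + a)) + z ^+ 2 / (e3 * (a + b))).
Proof.
have e3E : e3 = - e1 - e2 by apply: (addrI (e1 + e2)); rewrite e_sum0; ring.
move: e3_neq0; rewrite e3E => e3_neq0'.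
by field; rewrite ?e1_neq0 ?e2_neq0 ?e3_neq0' ?ab_neq0 ?bc_neq0 ?ca_neq0.
Qed.

Lemma diagonal_quadratic_identity (x y z : F) :
  e1 * a ^+ 2 + e2 * b ^+ 2 + e3 * c ^+ 2 = 0 ->
  (a * x + b * y + c * z) * (x + y + z)
  - 2^-1 * ((a + b) * (b + c) * (c + a)) * (x / (b + c) + y / (c + a) + z / (a + b)) ^+ 2
  = 2^-1 * (e1 * a + e2 * b + e3 * c) * (x ^+ 2 / e1 + y ^+ 2 / e2 + z ^+ 2 / e3).
Proof.
move=> quadric0; apply/eqP; rewrite -subr_eq0.
by rewrite diagonal_quadratic_defect quadric0 oppr0 !mul0r.
Qed.

End DiagonalQuadraticIdentity.

Theorem lemma2p9 (e1 e2 e3 a b c : int)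
  (he1 : e1 != 0) (he2 : e2 != 0) (he3 : e3 != 0)
  (hsum : e1 + e2 + e3 = 0)
  (habc : e1 * a ^+ 2 + e2 * b ^+ 2 + e3 * c ^+ 2 = 0)
  (hab : a + b != 0) (hbc : b + c != 0) (hca : c + a != 0) :
  forall x y z : rat,
    (a%:~R * x + b%:~R * y + c%:~R * z) * (x + y + z)
    - 2^-1 * ((a + b)%:~R * (b + c)%:~R * (c + a)%:~R)
      * (x / (b + c)%:~R + y / (c + a)%:~R + z / (a + b)%:~R) ^+ 2
    = 2^-1 * (e1 * a + e2 * b + e3 * c)%:~R
      * (x ^+ 2 / e1%:~R + y ^+ 2 / e2%:~R + z ^+ 2 / e3%:~R).
Proof.
move=> x y z; rewrite !rmorphD !rmorphM /=.
apply: diagonal_quadratic_identity; rewrite ?intr_eq0 //.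
- by rewrite -!rmorphD hsum.
- by rewrite -rmorphD intr_eq0.
- by rewrite -rmorphD intr_eq0.
- by rewrite -rmorphD intr_eq0.
- by rewrite -!rmorphXn -!rmorphM -!rmorphD habc.
Qed.
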